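(* For a nonnegative integer $n$, let $r_{\mathrm{OPT}}(n)$ be the number of optimal $\{0,1,-1\}$-representations of $n$. Then $r_{\mathrm{OPT}}$ is $2$-quasimultiplicative; specifically, for all nonnegative integers $a,b,k$ with $b<2^k$, $$r_{\mathrm{OPT}}(2^{k+3}a+b)=r_{\mathrm{OPT}}(a)\,r_{\mathrm{OPT}}(b).$$
   Context: A $\{0,1,-1\}$-representation of $n$ is an expression $n=\sum_{i\ge0}d_i2^i$ with $d_i\in\{0,1,-1\}$ and only finitely many $d_i\neq0$. It is optimal if its number of nonzero digits is minimal among all $\{0,1,-1\}$-representations of $n$. A function $f$ is $2$-quasimultiplicative if for some nonnegative integer $r$, $f(2^{k+r}a+b)=f(a)f(b)$ whenever $0\le b<2^k$. *)

From HB Require Import structures.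
From mathcomp Require Import all_boot all_order all_algebra.
From mathcomp Require Import finmap.
From mathcomp Require Import boolp classical_sets cardinality.
Set Implicit Arguments. Unset Strict Implicit. Unset Printing Implicit Defensive.
Import Order.TTheory GRing.Theory Num.Theory.
Local Open Scope ring_scope.
Local Open Scope classical_set_scope.
Local Open Scope fset_scope.

(* A {0,1,-1}-representation is encoded as its finite digit sequence
   [:: d_0; d_1; ...; d_L] (least significant first), normalized so that the
   last digit is nonzero (the empty sequence represents 0).  This is a
   bijective encoding of finitely supported digit families. *)
Definition digits_ok (s : seq int) : bool :=
  all (fun d => d \in [:: 0; 1; -1]) s.

Definition normalized (s : seq int) : bool := last 1 s != 0.

Definition rep_value (s : seq int) : int :=
  \sum_(i < size s) s`_i * (2%:Z) ^+ i.

Definition is_rep (n : nat) (s : seq int) : bool :=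
  [&& digits_ok s, normalized s & rep_value s == n%:Z].

Definition weight (s : seq int) : nat := count (fun d => d != 0) s.

Definition optimal_rep (n : nat) (s : seq int) : Prop :=
  is_rep n s /\ forall t, is_rep n t -> (weight s <= weight t)%N.

(* r_OPT(n): the number of optimal representations of n (this set is finite;
   fset_set yields the corresponding finite set). *)
Definition optimal_reps (n : nat) : set (seq int) := [set s | optimal_rep n s].

Definition r_opt (n : nat) : nat := #|` fset_set (optimal_reps n) |.

From mathcomp Require Import all_boot.
From mathcomp Require Import all_order all_algebra finmap.
From mathcomp Require Import boolp classical_sets cardinality.
From mathcomp Require Import zify.
Set Implicit Arguments. Unset Strict Implicit. Unset Printing Implicit Defensive.
Import GRing.Theory Num.Theory.

(* Cut a representation of 2^(k+3) a + b, b < 2^k, after its k+3 lowest digits.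
   The low block is worth less than 2^(k+3) in absolute value, so it is worth
   either b, and then the high block is worth a, or b - 2^(k+3), and then its
   three top digits are all -1 while the high block is worth a + 1.  In the
   latter case, replacing these three digits by a single 1 and absorbing the
   borrow in the high block (which costs at most one nonzero digit) gives
   representations of b and a of smaller total weight.  Hence the optimal
   representations of 2^(k+3) a + b are exactly the optimal representations of
   b, padded with zeros to k+3 digits, followed by optimal representations
   of a. *)

Lemma card_fsetM (K K' : choiceType) (A : {fset K}) (B : {fset K'}) :
  #|` (A `*` B)%fset| = (#|` A| * #|` B|)%N.
Proof.
rewrite /fsetM (perm_size (enum_imfset2 _ _)); last by move=> [? ?] [? ?] _ _ /= [-> ->].
by rewrite size_allpairs.
Qed.

Section SignedDigits.
Local Open Scope ring_scope.
Local Open Scope classical_set_scope.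

Lemma PoszX m k : (m ^ k)%N%:Z = m%:Z ^+ k.
Proof. by rewrite -!natz natrX. Qed.

Fixpoint dval (s : seq int) : int := if s is d :: t then d + 2 * dval t else 0.

Lemma rep_valueE s : rep_value s = dval s.
Proof.
elim: s => [|d t IH]; first by rewrite /rep_value big_ord0.
rewrite /rep_value /= big_ord_recl /= expr0 mulr1 -IH /rep_value mulr_sumr.
by congr (_ + _); apply: eq_bigr => i _; rewrite exprS mulrCA.
Qed.

Lemma dval_cat s t : dval (s ++ t) = dval s + 2 ^+ size s * dval t.
Proof.
elim: s => [|d s IH] /=; first by rewrite expr0 mul1r add0r.
by rewrite IH exprS mulrDr addrA mulrA.
Qed.

Lemma dval_nseq0 n : dval (nseq n 0) = 0.
Proof. by elim: n => //= n ->; rewrite mulr0 addr0. Qed.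

Lemma digits_ok_cat s t : digits_ok (s ++ t) = digits_ok s && digits_ok t.
Proof. exact: all_cat. Qed.

Lemma digits_ok_nseq0 n : digits_ok (nseq n 0).
Proof. by elim: n. Qed.

Lemma weight_cat s t : weight (s ++ t) = (weight s + weight t)%N.
Proof. exact: count_cat. Qed.

Lemma weight_nseq0 n : weight (nseq n 0) = 0%N.
Proof. by elim: n. Qed.

Lemma digitP (d : int) : d \in [:: 0; 1; -1] -> [\/ d = 0, d = 1 | d = -1].
Proof. by rewrite !inE => /or3P[] /eqP ->; [constructor 1 | constructor 2 | constructor 3]. Qed.

Lemma dval_bound s : digits_ok s -> - 2 ^+ size s < dval s < 2 ^+ size s.
Proof.
elim: s => [|d s IH] //= /andP[/digitP Hd /IH]; rewrite exprS.
by set P := 2 ^+ size s; case: Hd => -> /andP[? ?]; apply/andP; split; lia.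
Qed.

Lemma digits_add_sign e t : e \in [:: 1; -1] -> digits_ok t ->
  exists2 u, digits_ok u & dval u = dval t + e /\ (weight u <= (weight t).+1)%N.
Proof.
move=> He; have [e0 ok_e] : e != 0 /\ e \in [:: 0; 1; -1].
  by move: He; rewrite !inE => /orP[] /eqP ->.
elim: t => [|d t IH] /=.
  by move=> _; exists [:: e]; rewrite /= ?ok_e // e0 add0r mulr0 addr0.
case/andP=> ok_d ok_t; have [d0|dn|de] : [\/ d = 0, d = - e | d = e].
  case/digitP: ok_d => ->; move: He; rewrite !inE => /orP[] /eqP ->;
    by [constructor 1 | constructor 2 | constructor 3].
- exists (e :: t); rewrite /= ?ok_e ?ok_t // d0 e0 ?eqxx; split=> //; lia.
- exists (0 :: t); rewrite /= ?ok_t // dn oppr_eq0 e0 ?eqxx; split=> //; lia.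
- have [u ok_u [vu wu]] := IH ok_t.
  by exists (0 :: u); rewrite /= ?ok_u // vu de e0 ?eqxx; split=> //; lia.
Qed.

Fixpoint trim (s : seq int) : seq int :=
  if s is d :: t then
    if (d == 0) && (trim t == [::]) then [::] else d :: trim t
  else [::].

Lemma dval_trim s : dval (trim s) = dval s.
Proof.
elim: s => [|d s IH] //=; case: ifP => [/andP[/eqP -> /eqP E]|_] /=; last by rewrite IH.
by rewrite -IH E /= mulr0 addr0.
Qed.

Lemma weight_trim s : weight (trim s) = weight s.
Proof.
elim: s => [|d s IH] //=; case: ifP => [/andP[/eqP -> /eqP E]|_] /=; last by rewrite IH.
by rewrite -IH E.
Qed.

Lemma digits_ok_trim s : digits_ok s -> digits_ok (trim s).
Proof. by elim: s => [|d s IH] //= /andP[ok_d /IH ok_s]; case: ifP => //= _; rewrite ok_d. Qed.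

Lemma normalized_cat s t : normalized (s ++ t) = if t is [::] then normalized s else normalized t.
Proof. by rewrite /normalized last_cat; case: t. Qed.

Lemma normalized_cons d t : normalized (d :: t) = if t is [::] then d != 0 else normalized t.
Proof. by case: t. Qed.

Lemma normalized_trim s : normalized (trim s).
Proof.
elim: s => [|d s IH] //=; case: ifP => // /negbT.
by rewrite normalized_cons; case: (trim s) IH => //= _; rewrite andbT.
Qed.

Lemma trim_id s : normalized s -> trim s = s.
Proof.
elim: s => [|d s IH] //=; rewrite normalized_cons.
by case: s IH => [_ /negbTE -> | e s IH /IH ->] //; rewrite andbF.
Qed.

Lemma trim_cat s t : trim (s ++ t) = if trim t == [::] then trim s else s ++ trim t.
Proof.
elim: s => [|d s IH] /=; first by case: eqP.
rewrite IH; have [//|nt] := eqVneq (trim t) [::].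
by case: (s) => [|e s'] /=; rewrite ?(negbTE nt) andbF.
Qed.

Lemma trim_nseq0 n : trim (nseq n 0) = [::].
Proof. by elim: n => //= n ->. Qed.

Lemma trimK s : s = trim s ++ nseq (size s - size (trim s)) 0.
Proof.
elim: s => [|d s IH] //=; case: ifP => [/andP[/eqP -> /eqP E]|_] /=.
  by rewrite {1}IH E subn0.
by rewrite subSS -IH.
Qed.

Lemma weight_gt0 s : normalized s -> s != [::] -> (0 < weight s)%N.
Proof.
elim: s => // d s IH; rewrite normalized_cons.
case: s IH => [_ /= -> // | e s IH /IH ws _]; exact: leq_trans (ws isT) (leq_addl _ _).
Qed.

Definition represents (n : nat) (s : seq int) : bool := digits_ok s && (dval s == n%:Z).

Lemma represents_trim n s : represents n s -> represents n (trim s).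
Proof. by case/andP=> ok_s vs; rewrite /represents digits_ok_trim // dval_trim. Qed.

Lemma optimal_repP n s : optimal_rep n s <->
  [/\ represents n s, normalized s & forall t, represents n t -> (weight s <= weight t)%N].
Proof.
rewrite /optimal_rep /is_rep /represents rep_valueE; split.
  move=> [/and3P[ok_s ns vs] min_s]; rewrite ok_s vs; split=> // t /represents_trim/andP[ok_t vt].
  by rewrite -(weight_trim t) min_s // ok_t normalized_trim rep_valueE.
move=> [/andP[ok_s vs] ns min_s]; rewrite ok_s ns vs; split=> // t /and3P[ok_t _ vt].
by rewrite min_s // /represents ok_t -rep_valueE.
Qed.

Lemma optimal_trim n s : represents n s ->
  (forall t, represents n t -> (weight s <= weight t)%N) -> optimal_rep n (trim s).
Proof.
move=> rs min_s; apply/optimal_repP; rewrite represents_trim ?normalized_trim //.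
by split=> // t; rewrite weight_trim; apply: min_s.
Qed.

Lemma exists_rep n : exists s, represents n s.
Proof.
elim: n => [|n [s /andP[ok_s /eqP vs]]]; first by exists [::].
have [t ok_t [vt _]] := digits_add_sign (mem_head _ _) ok_s.
by exists t; rewrite /represents ok_t vt vs intS addrC eqxx.
Qed.

Lemma exists_optimal n : exists s, optimal_rep n s.
Proof.
have [t rt] := exists_rep n.
have ex_w : exists m, `[< exists t, represents n t /\ weight t = m >].
  by exists (weight t); apply/asboolP; exists t.
case: (ex_minnP ex_w) => m /asboolP[s [rs <-]] min_m.
exists (trim s); apply: optimal_trim => // u ru.
by apply: min_m; apply/asboolP; exists u.
Qed.

Lemma low_block_cases (l : seq int) (b x y : int) : digits_ok l -> 0 <= b < 2 ^+ size l ->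
  dval l + 2 ^+ size l * x = b + 2 ^+ size l * y ->
  (dval l = b /\ x = y) \/ (dval l = b - 2 ^+ size l /\ x = y + 1).
Proof.
move=> /dval_bound; set P := 2 ^+ size l => /andP[lo hi] /andP[b0 bP] E.
have P0 : 0 < P by rewrite exprn_gt0.
have [lt2 gtm1] : x - y < 2 /\ -1 < x - y.
  by split; rewrite -(ltr_pM2l P0) mulrBr; lia.
have [xy|xy] : x = y \/ x = y + 1 by lia.
- by left; split=> //; move: E; rewrite xy; lia.
- by right; split=> //; move: E; rewrite xy mulrDr mulr1; lia.
Qed.

(* Since [dval l > - 2 ^+ size l], the top digits must satisfy [x + 2 y + 4 z < -6]. *)
Lemma top_digits_borrow (l : seq int) (x y z b : int) :
  digits_ok (l ++ [:: x; y; z]) -> 0 <= b < 2 ^+ size l ->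
  dval (l ++ [:: x; y; z]) = b - 2 ^+ (size l + 3) ->
  [/\ x = -1, y = -1, z = -1 & dval l = b - 2 ^+ size l].
Proof.
rewrite digits_ok_cat dval_cat exprD /= => /and4P[/dval_bound + /digitP dx /digitP dy /andP[/digitP dz _]].
set P := 2 ^+ size l => /andP[lo hi] /andP[b0 bP].
by case: dx => ->; case: dy => ->; case: dz => ->; split; lia.
Qed.

Lemma borrow_cheaper_reps (k a b : nat) (l h : seq int) :
  (b < 2 ^ k)%N -> size l = (k + 3)%N -> digits_ok l -> digits_ok h ->
  dval l = b%:Z - 2 ^+ (k + 3) -> dval h = a.+1%:Z ->
  exists lo hi, [/\ represents b lo, represents a hi & (weight lo + weight hi < weight l + weight h)%N].
Proof.
move=> bk sl ok_l ok_h vl vh.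
have sl1 : size (take k l) = k by rewrite size_takel // sl leq_addr.
have bk' : 0 <= b%:Z < 2 ^+ size (take k l) by rewrite sl1 -PoszX ltz_nat bk.
have [x [y [z dE]]] : exists x y z, drop k l = [:: x; y; z].
  have : size (drop k l) = 3%N by rewrite size_drop sl addKn.
  by case: (drop k l) => [|x [|y [|z []]]] // _; exists x, y, z.
rewrite -(cat_take_drop k l) dE in ok_l vl *.
rewrite -[in 2 ^+ _]sl1 in vl; have [xE yE zE vl1] := top_digits_borrow ok_l bk' vl.
have m1 : (-1 : int) \in [:: 1; -1] by rewrite !inE eqxx orbT.
have [hi ok_hi [vhi whi]] := digits_add_sign m1 ok_h.
exists (take k l ++ [:: 1]), hi; split.
- move: ok_l; rewrite /represents !digits_ok_cat => /andP[-> _].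
  by rewrite dval_cat vl1 sl1 /=; apply/eqP; lia.
- by rewrite /represents ok_hi vhi vh intS; apply/eqP; lia.
- by rewrite !weight_cat xE yE zE; move: whi; rewrite /weight /=; lia.
Qed.

Lemma represents_split (k a b : nat) s :
  (b < 2 ^ k)%N -> represents (2 ^ (k + 3) * a + b) s ->
  (exists lo hi, [/\ represents b lo, represents a hi & (weight lo + weight hi < weight s)%N]) \/
  (exists lo hi, [/\ represents b lo, represents a hi, size lo = (k + 3)%N
                    & s ++ nseq (k + 3) 0 = lo ++ hi]).
Proof.
move=> bk /andP[ok_s /eqP vs].
set s' := s ++ nseq (k + 3) 0; set lo := take (k + 3) s'; set hi := drop (k + 3) s'.
have Es : s' = lo ++ hi by rewrite cat_take_drop.
have slo : size lo = (k + 3)%N by rewrite size_takel // size_cat size_nseq leq_addl.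
have /andP[ok_lo ok_hi] : digits_ok lo && digits_ok hi.
  by rewrite -digits_ok_cat -Es digits_ok_cat ok_s digits_ok_nseq0.
have ws : weight s = (weight lo + weight hi)%N.
  by rewrite -weight_cat -Es weight_cat weight_nseq0 addn0.
have vlh : dval lo + 2 ^+ size lo * dval hi = b%:Z + 2 ^+ size lo * a%:Z.
  by rewrite -dval_cat -Es dval_cat dval_nseq0 mulr0 addr0 vs slo PoszD PoszM PoszX addrC.
have bk' : 0 <= b%:Z < 2 ^+ size lo.
  by rewrite slo -PoszX ltz_nat (leq_trans bk) // leq_pexp2l // leq_addr.
case: (low_block_cases ok_lo bk' vlh) => [[vlo vhi] | [vlo vhi]].
- by right; exists lo, hi; rewrite /represents ok_lo ok_hi vlo vhi !eqxx.
- left; rewrite ws; apply: (borrow_cheaper_reps bk slo ok_lo ok_hi); first by rewrite vlo slo.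
  by rewrite vhi intS addrC.
Qed.

(* The case [hi = [::]] keeps the result normalized. *)
Definition pad_cat k (lo hi : seq int) : seq int :=
  if hi is [::] then lo else lo ++ nseq (k + 3 - size lo) 0 ++ hi.

Lemma weight_pad_cat k lo hi : weight (pad_cat k lo hi) = (weight lo + weight hi)%N.
Proof. by case: hi => [|d hi]; rewrite /pad_cat ?addn0 // !weight_cat weight_nseq0. Qed.

Lemma normalized_pad_cat k lo hi :
  normalized lo -> normalized hi -> normalized (pad_cat k lo hi).
Proof. by case: hi => [|d hi] //= nlo nhi; rewrite catA normalized_cat. Qed.

Lemma represents_pad_cat (k a b : nat) lo hi : (size lo <= k + 3)%N ->
  represents b lo -> represents a hi -> represents (2 ^ (k + 3) * a + b) (pad_cat k lo hi).
Proof.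
move=> slo /andP[ok_lo /eqP vlo] /andP[ok_hi /eqP vhi]; rewrite /represents /pad_cat.
case: hi ok_hi vhi => [|d hi] ok_hi vhi.
  have -> : a = 0%N by move: vhi => /=; lia.
  by rewrite muln0 add0n ok_lo vlo eqxx.
rewrite !digits_ok_cat ok_lo ok_hi digits_ok_nseq0 !dval_cat dval_nseq0 add0r size_nseq.
by rewrite mulrA -exprD subnKC // vlo vhi PoszD PoszM PoszX addrC eqxx.
Qed.

Lemma trim_cat_pad k lo hi : size lo = (k + 3)%N -> trim (lo ++ hi) = pad_cat k (trim lo) (trim hi).
Proof.
move=> slo; rewrite trim_cat /pad_cat; case: (trim hi) => [|d t] //=.
by rewrite {1}(trimK lo) slo catA.
Qed.

Lemma pad_cat_inj k lo lo' hi hi' : (size lo <= k + 3)%N -> (size lo' <= k + 3)%N ->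
  normalized lo -> normalized lo' -> pad_cat k lo hi = pad_cat k lo' hi' -> lo = lo' /\ hi = hi'.
Proof.
move=> slo slo' nlo nlo'; rewrite /pad_cat.
case: hi => [|d hi]; case: hi' => [|d' hi'] //.
- by move=> E; have := congr1 size E; rewrite !size_cat size_nseq /=; lia.
- by move=> E; have := congr1 size E; rewrite !size_cat size_nseq /=; lia.
rewrite !catA => /eqP; rewrite eqseq_cat; last by rewrite !size_cat !size_nseq !subnKC.
case/andP=> /eqP E /eqP ->; split=> //.
by move: (congr1 trim E); rewrite !trim_cat !trim_nseq0 eqxx !trim_id.
Qed.

Lemma optimal_rep_size (k b : nat) s : (b < 2 ^ k)%N -> optimal_rep b s -> (size s <= k + 3)%N.
Proof.
move=> bk /optimal_repP[rs ns min_s]; rewrite leqNgt; apply/negP => long.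
have rs0 : represents (2 ^ (k + 3) * 0 + b) s by rewrite muln0.
case: (represents_split bk rs0) => [[lo [hi [rlo _ w]]] | [lo [hi [rlo _ slo E]]]].
  by have := min_s _ rlo; rewrite leqNgt (leq_ltn_trans (leq_addr _ _) w).
have hiE : hi = drop (k + 3) s ++ nseq (k + 3) 0 by rewrite -(drop_size_cat hi slo) -E drop_cat long.
have ds0 : drop (k + 3) s != [::] by rewrite -size_eq0 size_drop subn_eq0 -ltnNge.
have nds : normalized (drop (k + 3) s).
  by move: ns ds0; rewrite -{1}(cat_take_drop (k + 3) s) normalized_cat; case: (drop _ _).
have := weight_gt0 nds ds0; have := min_s _ rlo; have := congr1 weight E.
by rewrite hiE !weight_cat !weight_nseq0; lia.
Qed.

Lemma optimal_weight_sum_leq (k a b : nat) tb ta s : (b < 2 ^ k)%N ->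
  optimal_rep b tb -> optimal_rep a ta -> represents (2 ^ (k + 3) * a + b) s ->
  (weight tb + weight ta <= weight s)%N.
Proof.
move=> bk /optimal_repP[_ _ min_b] /optimal_repP[_ _ min_a] /(represents_split bk).
case=> [[lo [hi [rlo rhi w]]] | [lo [hi [rlo rhi _ E]]]].
  exact/ltnW/(leq_ltn_trans (leq_add (min_b _ rlo) (min_a _ rhi)) w).
have := congr1 weight E; rewrite !weight_cat weight_nseq0 addn0 => ->.
exact: leq_add (min_b _ rlo) (min_a _ rhi).
Qed.

Lemma optimal_pad_cat (k a b : nat) tb ta : (b < 2 ^ k)%N ->
  optimal_rep b tb -> optimal_rep a ta -> optimal_rep (2 ^ (k + 3) * a + b) (pad_cat k tb ta).
Proof.
move=> bk ob oa; have /optimal_repP[rb nb _] := ob; have /optimal_repP[ra na _] := oa.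
apply/optimal_repP; split.
- exact: represents_pad_cat (optimal_rep_size bk ob) rb ra.
- exact: normalized_pad_cat.
- by move=> t rt; rewrite weight_pad_cat; apply: optimal_weight_sum_leq bk ob oa rt.
Qed.

Lemma optimal_rep_split (k a b : nat) s : (b < 2 ^ k)%N -> optimal_rep (2 ^ (k + 3) * a + b) s ->
  exists tb ta, [/\ optimal_rep b tb, optimal_rep a ta & s = pad_cat k tb ta].
Proof.
move=> bk /optimal_repP[rs ns min_s].
have [tb /[dup] ob /optimal_repP[_ _ min_b]] := exists_optimal b.
have [ta /[dup] oa /optimal_repP[_ _ min_a]] := exists_optimal a.
have /optimal_repP[rtab _ _] := optimal_pad_cat bk ob oa.
have := min_s _ rtab; rewrite weight_pad_cat => ws.
case: (represents_split bk rs) => [[lo [hi [rlo rhi w]]] | [lo [hi [rlo rhi slo E]]]].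
  by have := min_b _ rlo; have := min_a _ rhi; lia.
have wE := congr1 weight E; rewrite !weight_cat weight_nseq0 addn0 in wE.
have hb := min_b _ rlo; have ha := min_a _ rhi; rewrite wE in ws.
exists (trim lo), (trim hi); split.
- by apply: optimal_trim => // u ru; apply: leq_trans (min_b _ ru); lia.
- by apply: optimal_trim => // u ru; apply: leq_trans (min_a _ ru); lia.
- by rewrite -(trim_id ns) -(trim_cat_pad _ slo) -E trim_cat trim_nseq0 eqxx.
Qed.

Lemma optimal_repsE (k a b : nat) : (b < 2 ^ k)%N ->
  optimal_reps (2 ^ (k + 3) * a + b) =
  [set pad_cat k p.1 p.2 | p in optimal_reps b `*` optimal_reps a].
Proof.
move=> bk; apply/seteqP; split=> s /=.
  by case/(optimal_rep_split bk) => tb [ta [ob oa ->]]; exists (tb, ta).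
by case=> -[tb ta] [/= ob oa] <-; apply: optimal_pad_cat.
Qed.

Fixpoint digit_seqs m : seq (seq int) :=
  if m is m'.+1 then [::] :: [seq d :: t | d <- [:: 0; 1; -1], t <- digit_seqs m']
  else [:: [::]].

Lemma mem_digit_seqs m s : digits_ok s -> (size s <= m)%N -> s \in digit_seqs m.
Proof.
elim: m s => [|m IH] [|d s] ok_s sm; rewrite ?mem_head //.
rewrite in_cons; apply/orP; right; apply/allpairsP; exists (d, s).
by case/andP: ok_s => ok_d ok_s; rewrite ok_d IH.
Qed.

Lemma finite_optimal_reps n : finite_set (optimal_reps n).
Proof.
apply: (sub_finite_set _ (finite_seq (digit_seqs (n + 3)))) => s os /=.
apply: mem_digit_seqs; first by case/optimal_repP: os => /andP[].
exact: optimal_rep_size (ltn_expl _ (ltnSn 1)) os.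
Qed.

End SignedDigits.

Theorem lemma2 (a b k : nat) :
  (b < 2 ^ k)%N ->
  r_opt (2 ^ (k + 3) * a + b) = (r_opt a * r_opt b)%N.
Proof.
move=> bk; have [fa fb] := (finite_optimal_reps a, finite_optimal_reps b).
rewrite /r_opt (optimal_repsE _ bk) fset_set_image; last exact: finite_setX.
rewrite card_in_imfset /=; first by rewrite fset_setX // card_fsetM mulnC.
move=> [lo hi] [lo' hi']; rewrite !in_fset_set; try exact: finite_setX.
rewrite !inE => -[/= ob _] [/= ob' _] E.
have [/optimal_repP[_ nb _] /optimal_repP[_ nb' _]] := (ob, ob').
by case: (pad_cat_inj (optimal_rep_size bk ob) (optimal_rep_size bk ob') nb nb' E) => -> ->.
Qed.
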